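(* Let $A\in\mathbb{R}^{n\times n}$, $B_i\in\mathbb{R}^{n\times p_i}$, $C_i\in\mathbb{R}^{q_i\times n}$, $i\in\{1,\dots,m\}$, define a jointly controllable and jointly observable $m$-channel linear system, let the neighbor graph $\mathbb{N}$ on $\{1,\dots,m\}$ be strongly connected, and let $F_i\in\mathbb{R}^{p_i\times n}$ be arbitrary. Let $b_i$ be the $i$th unit vector of $\mathbb{R}^m$ and define $\tilde A = I_{m}\otimes\big(A+\sum_{j=1}^m B_jF_j\big) - Q$, where $Q$ is the $nm\times nm$ block matrix whose $(i,j)$th $n\times n$ block is $B_jF_j$; $\tilde B_i = b_i\otimes I_n$; $\hat C_i = C_i\tilde B_i'$; $\tilde C_i = \mathrm{column}\{C_{ij^i_1},\dots,C_{ij^i_{m_i}}\}$ where $\{j^i_1,\dots,j^i_{m_i}\}=\mathcal{N}_i$ and $C_{ij}=(b_i'-b_j')\otimes I_n$. Then the $m$-channel linear system $$\dot\epsilon = \tilde A\epsilon + \sum_{j=1}^m\tilde B_j\tilde v_j,\qquad \tilde y_i = \begin{bmatrix}\hat C_i\\ \tilde C_i\end{bmatrix}\epsilon,\quad i\in\{1,\dots,m\},$$ is jointly controllable and jointly observable.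
   Context: An $m$-channel system $\{A,B_i,C_i;m\}$ is jointly controllable if $(A,[B_1\ \cdots\ B_m])$ is controllable and jointly observable if $(\mathrm{column}\{C_1,\dots,C_m\},A)$ is observable. The neighbor graph has an arc $j\to i$ iff $j$ is a neighbor of $i$; $\mathcal{N}_i$ is the set of neighbors of $i$ including $i$. $'$ denotes transpose and $\otimes$ the Kronecker product. *)

From HB Require Import structures.
From mathcomp Require Import all_boot all_order all_algebra.
From mathcomp Require Import mxtens.
From mathcomp Require Import reals.
Set Implicit Arguments. Unset Strict Implicit. Unset Printing Implicit Defensive.
Import Order.TTheory GRing.Theory Num.Theory.
Local Open Scope ring_scope.

Section Defs.
Variable R : fieldType.

Definition controllable (n p : nat) (A : 'M[R]_n) (B : 'M[R]_(n, p)) : Prop :=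
  \rank (\mxrow_(k < n) (A ^+ k *m B)) = n.

Definition observable (n q : nat) (C : 'M[R]_(q, n)) (A : 'M[R]_n) : Prop :=
  \rank (\mxcol_(k < n) (C *m A ^+ k)) = n.

Definition jointly_controllable (n m : nat) (p : 'I_m -> nat)
  (A : 'M[R]_n) (B : forall i : 'I_m, 'M[R]_(n, p i)) : Prop :=
  controllable A (\mxrow_(i < m) B i).

Definition jointly_observable (n m : nat) (q : 'I_m -> nat)
  (C : forall i : 'I_m, 'M[R]_(q i, n)) (A : 'M[R]_n) : Prop :=
  observable (\mxcol_(i < m) C i) A.

Definition unitv (m : nat) (i : 'I_m) : 'cV[R]_m := delta_mx i 0.

Definition Btil (m n : nat) (i : 'I_m) : 'M[R]_(m * n, n) :=
  castmx (erefl (m * n), mul1n n) (unitv i *t (1%:M : 'M[R]_n)).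

Definition Cij (m n : nat) (i j : 'I_m) : 'M[R]_(n, m * n) :=
  castmx (mul1n n, erefl (m * n)) (((unitv i)^T - (unitv j)^T) *t (1%:M : 'M[R]_n)).

Definition Qmx (n m : nat) (p : 'I_m -> nat)
  (B : forall i : 'I_m, 'M[R]_(n, p i)) (F : forall i : 'I_m, 'M[R]_(p i, n))
  : 'M[R]_(m * n) :=
  \sum_(i < m) \sum_(j < m) (delta_mx i j *t (B j *m F j)).

Definition Atil (n m : nat) (p : 'I_m -> nat) (A : 'M[R]_n)
  (B : forall i : 'I_m, 'M[R]_(n, p i)) (F : forall i : 'I_m, 'M[R]_(p i, n))
  : 'M[R]_(m * n) :=
  ((1%:M : 'M[R]_m) *t (A + \sum_(j < m) B j *m F j)) - Qmx B F.

End Defs.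

(* Neighbor graph: nbr i j  <=> j is a neighbor of i, i.e. arc j -> i. *)
Definition nbr_arc (m : nat) (nbr : rel 'I_m) : rel 'I_m := fun x y => nbr y x.

Definition strongly_connected (m : nat) (nbr : rel 'I_m) : Prop :=
  forall i j : 'I_m, connect (nbr_arc nbr) i j.

Definition Nset (m : nat) (nbr : rel 'I_m) (i : 'I_m) : {set 'I_m} :=
  i |: [set j | nbr i j].

Section Defs2.
Variable R : fieldType.

Definition Chat (n m : nat) (q : 'I_m -> nat) (C : forall i : 'I_m, 'M[R]_(q i, n))
  (i : 'I_m) : 'M[R]_(q i, m * n) := C i *m (@Btil R m n i)^T.

Definition Ctil (n m : nat) (nbr : rel 'I_m) (i : 'I_m)
  : 'M[R]_(\sum_(k < #|Nset nbr i|) n, m * n) :=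
  \mxcol_(k < #|Nset nbr i|) @Cij R m n i (enum_val k).

Definition Ynew (n m : nat) (q : 'I_m -> nat) (C : forall i : 'I_m, 'M[R]_(q i, n))
  (nbr : rel 'I_m) (i : 'I_m)
  : 'M[R]_(q i + \sum_(k < #|Nset nbr i|) n, m * n) :=
  col_mx (Chat C i) (@Ctil n m nbr i).

End Defs2.

From HB Require Import structures.
From mathcomp Require Import all_boot all_order all_algebra.
From mathcomp Require Import mxtens.
From mathcomp Require Import reals.
(* The inputs b_j ⊗ I_n together span R^(mn), so the new system is
   controllable whatever A~ is.  For observability, let e be unobservable.
   The outputs C_ij e = e_i - e_j vanish along every arc of the neighbor graph,
   so by strong connectivity e = 1 ⊗ x is a consensus vector.  On consensus
   vectors the Q-term of A~ exactly cancels the feedback term, hence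
   A~^k (1 ⊗ x) = 1 ⊗ A^k x and the outputs C^_i A~^k e are C_i A^k x; joint
   observability of (C, A) forces x = 0. *)

Set Implicit Arguments. Unset Strict Implicit. Unset Printing Implicit Defensive.
Import Order.TTheory GRing.Theory Num.Theory.
Local Open Scope ring_scope.

Lemma mxrow_eq0 (V : nmodType) m q (q_ : 'I_q -> nat)
    (B_ : forall j, 'M[V]_(m, q_ j)) :
  \mxrow_j B_ j = 0 <-> forall j, B_ j = 0.
Proof.
split=> [B0 j | B0]; first by rewrite -(mxrowK B_ j) B0 submxrow0.
by rewrite (eq_mxrow B0) mxrow0.
Qed.

Lemma mxcol_eq0 (V : nmodType) p (p_ : 'I_p -> nat) n
    (B_ : forall i, 'M[V]_(p_ i, n)) :
  \mxcol_i B_ i = 0 <-> forall i, B_ i = 0.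
Proof.
split=> [B0 i | B0]; first by rewrite -(mxcolK B_ i) B0 submxcol0.
by rewrite (eq_mxcol B0) mxcol0.
Qed.

Lemma sumr_eq_scale (R : pzRingType) (V : lmodType R) (I : finType) (i : I)
    (X : I -> V) :
  \sum_j (j == i)%:R *: X j = X i.
Proof.
by rewrite (bigD1 i) //= eqxx scale1r big1 ?addr0 // => j /negPf->; rewrite scale0r.
Qed.

Lemma strongly_connected_const (T : Type) m (nbr : rel 'I_m) (f : 'I_m -> T) :
  strongly_connected nbr -> (forall i j, nbr i j -> f i = f j) ->
  forall i j, f i = f j.
Proof.
move=> conn f_nbr i j; have /connectP [s] := conn i j.
elim: s i => [|k s IHs] i /=; first by move=> _ ->.
by case/andP=> ki ks j_last; rewrite -(f_nbr _ _ ki); apply: IHs ks j_last.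
Qed.

Section Rank.
Variable R : fieldType.

Lemma controllable_full_rank n p (A : 'M[R]_n) (B : 'M[R]_(n, p)) :
  \rank B = n -> controllable A B.
Proof.
case: n A B => [|n] A B rankB; apply/eqP; apply: inj_row_free => u.
  by rewrite thinmx0.
rewrite mul_mxrow => /mxrow_eq0 /(_ ord0); rewrite expr0 mul1mx => uB0.
by apply: (row_free_inj (introT eqP rankB)); rewrite uB0 mul0mx.
Qed.

Lemma observableP n q (C : 'M[R]_(q, n)) (A : 'M[R]_n) :
  observable C A <->
  (forall v : 'cV_n, (forall k, (k < n)%N -> C *m (A ^+ k *m v) = 0) -> v = 0).
Proof.
have obsE (v : 'cV[R]_n) : \mxcol_(k < n) (C *m A ^+ k) *m v = 0 <->
    forall k, (k < n)%N -> C *m (A ^+ k *m v) = 0.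
  rewrite mxcol_mul mxcol_eq0; split=> [Ov k lt_kn | Ov k].
    by have := Ov (Ordinal lt_kn); rewrite mulmxA.
  by rewrite -mulmxA Ov.
split=> [rankO v /obsE Ov | Oinj].
  by apply: (row_full_inj (introT eqP rankO)); rewrite Ov mulmx0.
apply/eqP; rewrite -mxrank_tr; apply: inj_row_free => u uO0.
apply: trmx_inj; rewrite trmx0; apply/Oinj/obsE.
by rewrite -[LHS]trmxK trmx_mul trmxK uO0 trmx0.
Qed.

Lemma jointly_observableP n m (q : 'I_m -> nat) (C : forall i, 'M[R]_(q i, n))
    (A : 'M[R]_n) :
  jointly_observable C A <->
  (forall v : 'cV_n,
     (forall k, (k < n)%N -> forall i, C i *m (A ^+ k *m v) = 0) -> v = 0).
Proof.
rewrite /jointly_observable observableP.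
split=> Oinj v Ov; apply: Oinj => k lt_kn.
  by rewrite mxcol_mul; apply/mxcol_eq0 => i; apply: Ov.
by move=> i; move: (Ov k lt_kn); rewrite mxcol_mul => /mxcol_eq0.
Qed.

End Rank.

Section Blocks.
Variables (R : fieldType) (m n : nat).
Implicit Types (w : 'cV[R]_(m * n)) (x : 'cV[R]_n).

Lemma big_mxtens (V : nmodType) (F : 'I_(m * n) -> V) :
  \sum_r F r = \sum_i \sum_a F (mxtens_index (i, a)).
Proof.
rewrite pair_big /= (reindex (@mxtens_index m n)) //=; first by apply: eq_bigr => -[].
by exists (@mxtens_unindex m n) => r _; rewrite (mxtens_indexK, mxtens_unindexK).
Qed.

Definition blockv w (j : 'I_m) : 'cV[R]_n := \col_a w (mxtens_index (j, a)) 0.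

(* [consensus x] is 1_m ⊗ x. *)
Definition consensus x : 'cV[R]_(m * n) := \col_r x (mxtens_unindex r).2 0.

Lemma blockv_inj w1 w2 : (forall j, blockv w1 j = blockv w2 j) -> w1 = w2.
Proof.
move=> eq_blocks; apply/matrixP => r z; rewrite (ord1 z).
by case: (mxtens_indexP r) => j a; have /matrixP/(_ a 0) := eq_blocks j; rewrite !mxE.
Qed.

Lemma blockv0 j : blockv 0 j = 0.
Proof. by apply/matrixP => a z; rewrite !mxE. Qed.

Lemma blockvB w1 w2 j : blockv (w1 - w2) j = blockv w1 j - blockv w2 j.
Proof. by apply/matrixP => a z; rewrite !mxE. Qed.

Lemma blockv_suml (I : finType) (M : I -> 'M[R]_(m * n)) w j :
  blockv ((\sum_k M k) *m w) j = \sum_k blockv (M k *m w) j.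
Proof.
apply/matrixP => a z; rewrite mulmx_suml !mxE !summxE.
by apply: eq_bigr => k _; rewrite !mxE.
Qed.

Lemma blockv_consensus x j : blockv (consensus x) j = x.
Proof. by apply/matrixP => a z; rewrite (ord1 z) !mxE mxtens_indexK. Qed.

Lemma consensus0 : consensus 0 = 0.
Proof. by apply/matrixP => r z; rewrite !mxE. Qed.

Lemma blockv_tensmx (P : 'M[R]_m) (M : 'M[R]_n) w i :
  blockv ((P *t M) *m w) i = \sum_k P i k *: (M *m blockv w k).
Proof.
apply/matrixP => a z; rewrite !mxE summxE big_mxtens.
apply: eq_bigr => k _; rewrite !mxE mulr_sumr; apply: eq_bigr => b _.
by rewrite !mxE !mxtens_indexK /= mulrA.
Qed.

Lemma blockv_tens1mx (M : 'M[R]_n) w i :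
  blockv ((1%:M *t M) *m w) i = M *m blockv w i.
Proof.
rewrite blockv_tensmx -[RHS](sumr_eq_scale i (fun k => M *m blockv w k)).
by apply: eq_bigr => k _; rewrite mxE eq_sym.
Qed.

Lemma blockv_tens_delta (M : 'M[R]_n) i' j' w i :
  blockv ((delta_mx i' j' *t M) *m w) i = (i' == i)%:R *: (M *m blockv w j').
Proof.
rewrite blockv_tensmx -(sumr_eq_scale j' (fun k => M *m blockv w k)) scaler_sumr.
by apply: eq_bigr => k _; rewrite mxE -mulnb natrM -scalerA [i == i']eq_sym.
Qed.

Lemma BtilE j i a b :
  @Btil R m n j (mxtens_index (i, a)) b = ((i == j) && (a == b))%:R.
Proof.
rewrite /Btil castmxE /= cast_ord_id.
rewrite (_ : cast_ord _ b = @mxtens_index 1 n (ord0, b)); last first.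
  by apply: val_inj => /=; rewrite mul0n add0n.
by rewrite tensmxE /unitv !mxE eqxx andbT -natrM mulnb.
Qed.

Lemma tr_Btil_mul j w : (@Btil R m n j)^T *m w = blockv w j.
Proof.
apply/matrixP => a z; rewrite (ord1 z) !mxE (bigD1 (mxtens_index (j, a))) //=.
rewrite !mxE BtilE !eqxx mul1r big1 ?addr0 // => r.
case: (mxtens_indexP r) => i b.
rewrite (inj_eq (can_inj (@mxtens_indexK m n))) xpair_eqE.
by move=> /negPf ib_ja; rewrite !mxE BtilE ib_ja mul0r.
Qed.

Lemma Cij_Btil i j : @Cij R m n i j = (@Btil R m n i)^T - (@Btil R m n j)^T.
Proof.
apply/matrixP => c r; case: (mxtens_indexP r) => k a.
rewrite /Cij castmxE /= cast_ord_id.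
rewrite (_ : cast_ord _ c = @mxtens_index 1 n (ord0, c)); last first.
  by apply: val_inj => /=; rewrite mul0n add0n.
by rewrite tensmxE !mxE !BtilE !andbT -!mulnb !natrM [a == c]eq_sym mulrBl.
Qed.

Lemma Cij_mul i j w : @Cij R m n i j *m w = blockv w i - blockv w j.
Proof. by rewrite Cij_Btil mulmxBl !tr_Btil_mul. Qed.

Lemma Chat_mul q (C : forall i, 'M[R]_(q i, n)) i w :
  Chat C i *m w = C i *m blockv w i.
Proof. by rewrite /Chat -mulmxA tr_Btil_mul. Qed.

Lemma Ynew_mul_eq0 q (C : forall i, 'M[R]_(q i, n)) nbr i w :
  Ynew C nbr i *m w = 0 ->
  C i *m blockv w i = 0 /\ {in Nset nbr i, forall j, blockv w i = blockv w j}.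
Proof.
rewrite /Ynew mul_col_mx => /eqP; rewrite col_mx_eq0 => /andP [/eqP Chat0 /eqP Ctil0].
split=> [|j Nj]; first by rewrite -Chat_mul.
move: Ctil0; rewrite /Ctil mxcol_mul => /mxcol_eq0 /(_ (enum_rank_in Nj j)).
by rewrite (enum_rankK_in Nj Nj) Cij_mul => /eqP; rewrite subr_eq0 => /eqP.
Qed.

Lemma Qmx_consensus p (B : forall i, 'M[R]_(n, p i))
    (F : forall i, 'M[R]_(p i, n)) x :
  Qmx B F *m consensus x = consensus ((\sum_j B j *m F j) *m x).
Proof.
apply: blockv_inj => i; rewrite blockv_consensus /Qmx blockv_suml.
under eq_bigr => i' _ do rewrite blockv_suml.
under eq_bigr => i' _ do under eq_bigr => j' _ do
  rewrite blockv_tens_delta blockv_consensus.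
under eq_bigr => i' _ do rewrite -scaler_sumr.
by rewrite sumr_eq_scale mulmx_suml.
Qed.

Lemma Atil_consensus p (A : 'M[R]_n) (B : forall i, 'M[R]_(n, p i))
    (F : forall i, 'M[R]_(p i, n)) x :
  Atil A B F *m consensus x = consensus (A *m x).
Proof.
apply: blockv_inj => i; rewrite /Atil mulmxBl Qmx_consensus blockvB.
by rewrite blockv_tens1mx !blockv_consensus mulmxDl addrK.
Qed.

Lemma Atil_pow_consensus p (A : 'M[R]_n) (B : forall i, 'M[R]_(n, p i))
    (F : forall i, 'M[R]_(p i, n)) x k :
  Atil A B F ^+ k *m consensus x = consensus (A ^+ k *m x).
Proof.
elim: k => [|k IHk]; first by rewrite !expr0 !mul1mx.
by rewrite !exprS -!mulmxE -!mulmxA IHk Atil_consensus.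
Qed.

End Blocks.

Arguments consensus {R m n} x.

Section NewSystem.
Variables (R : fieldType) (n m : nat) (p q : 'I_m -> nat).

Lemma jointly_controllable_Btil (At : 'M[R]_(m * n)) :
  jointly_controllable At (fun j : 'I_m => @Btil R m n j).
Proof.
apply: controllable_full_rank; apply/eqP; apply: inj_row_free => u.
rewrite mul_mxrow => /mxrow_eq0 uB0; apply: trmx_inj; rewrite trmx0.
by apply: blockv_inj => j; rewrite blockv0 -tr_Btil_mul -trmx_mul uB0 trmx0.
Qed.

Lemma jointly_observable_Ynew (A : 'M[R]_n) (B : forall i, 'M[R]_(n, p i))
    (C : forall i, 'M[R]_(q i, n)) (nbr : rel 'I_m)
    (F : forall i, 'M[R]_(p i, n)) :
  jointly_observable C A -> strongly_connected nbr ->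
  jointly_observable (fun i => Ynew C nbr i) (Atil A B F).
Proof.
move=> /jointly_observableP obsCA conn; apply/jointly_observableP => v Yv0.
have [mn0|mn_gt0] := posnP (m * n).
  by apply/matrixP => r; have := ltn_ord r; rewrite [X in (_ < X)%N]mn0.
have /andP [m_gt0 _] : (0 < m)%N && (0 < n)%N by rewrite -muln_gt0.
have v_blocks : forall i j, blockv v i = blockv v j.
  apply: strongly_connected_const conn _ => i j nbr_ij.
  have /Ynew_mul_eq0 [_ agree] := Yv0 0%N mn_gt0 i; rewrite expr0 mul1mx in agree.
  by apply: agree; rewrite !inE nbr_ij orbT.
pose i0 : 'I_m := Ordinal m_gt0; set x := blockv v i0.
have v_cons : v = consensus x.
  by apply: blockv_inj => j; rewrite blockv_consensus (v_blocks j i0).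
have x0 : x = 0.
  apply: obsCA => k lt_kn i.
  have lt_kmn : (k < m * n)%N := leq_trans lt_kn (leq_pmull n m_gt0).
  have /Ynew_mul_eq0 [] := Yv0 k lt_kmn i.
  by rewrite v_cons Atil_pow_consensus blockv_consensus.
by rewrite v_cons x0 consensus0.
Qed.

End NewSystem.

Theorem lemma1 (R : realType) (n m : nat) (p q : 'I_m -> nat)
  (A : 'M[R]_n)
  (B : forall i : 'I_m, 'M[R]_(n, p i))
  (C : forall i : 'I_m, 'M[R]_(q i, n))
  (nbr : rel 'I_m)
  (F : forall i : 'I_m, 'M[R]_(p i, n)) :
  jointly_controllable A B ->
  jointly_observable C A ->
  strongly_connected nbr ->
  jointly_controllable (Atil A B F) (fun j : 'I_m => @Btil R m n j) /\
  jointly_observable (fun i : 'I_m => Ynew C nbr i) (Atil A B F).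
Proof.
move=> _ obsCA conn; split; first exact: jointly_controllable_Btil.
exact: jointly_observable_Ynew.
Qed.
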